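(* Let $N\ge 1$. Inside $S^{N-1}_{\mathbb R,+}$ the following equalities hold: $$S^{N-1}_{\mathbb R}\cap\bar S^{N-1}_{\mathbb R}=S^{N-1,0}_{\mathbb R},\qquad S^{N-1}_{\mathbb R}\cap\bar S^{N-1}_{\mathbb R,*}=S^{N-1,1}_{\mathbb R},$$ $$S^{N-1}_{\mathbb R,*}\cap\bar S^{N-1}_{\mathbb R}=\bar S^{N-1,1}_{\mathbb R},\qquad S^{N-1}_{\mathbb R,*}\cap\bar S^{N-1}_{\mathbb R,*}=S^{N-1,1}_{\mathbb R,*}.$$ Moreover one has the inclusions $S^{N-1,0}_{\mathbb R}\subset S^{N-1,1}_{\mathbb R}\subset S^{N-1}_{\mathbb R}$, $S^{N-1,0}_{\mathbb R}\subset\bar S^{N-1,1}_{\mathbb R}\subset\bar S^{N-1}_{\mathbb R}$, $\bar S^{N-1,1}_{\mathbb R}\subset S^{N-1,1}_{\mathbb R,*}\subset S^{N-1}_{\mathbb R,*}$, $S^{N-1,1}_{\mathbb R}\subset S^{N-1,1}_{\mathbb R,*}\subset\bar S^{N-1}_{\mathbb R,*}$, $\bar S^{N-1}_{\mathbb R}\subset\bar S^{N-1}_{\mathbb R,*}\subset S^{N-1}_{\mathbb R,+}$ and $S^{N-1}_{\mathbb R}\subset S^{N-1}_{\mathbb R,*}\subset S^{N-1}_{\mathbb R,+}$.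
   Context: $C(S^{N-1}_{\mathbb R,+})$ denotes the universal $C^*$-algebra generated by self-adjoint elements $x_1,\dots,x_N$ subject to $\sum_i x_i^2=1$. A noncommutative subspace $X\subset S^{N-1}_{\mathbb R,+}$ is given by a quotient $C(X)$ of $C(S^{N-1}_{\mathbb R,+})$ by relations among the standard coordinates $x_i$; $X\subset Y$ means $C(X)$ is a quotient of $C(Y)$ compatibly with the $x_i$, and $X\cap Y$ is obtained by imposing both sets of relations. Subspheres: $S^{N-1}_{\mathbb R}$: $x_ix_j=x_jx_i$ for all $i,j$ (the usual sphere); $\bar S^{N-1}_{\mathbb R}$: $x_ix_j=-x_jx_i$ for all $i\ne j$; $S^{N-1}_{\mathbb R,*}$: $x_ix_jx_k=x_kx_jx_i$ for all $i,j,k$; $\bar S^{N-1}_{\mathbb R,*}$: $x_ix_jx_k=-x_kx_jx_i$ for $i,j,k$ pairwise distinct and $x_ix_jx_k=x_kx_jx_i$ otherwise. For $d\in\{1,\dots,N\}$, the polygonal versions $S^{N-1,d-1}_{\mathbb R}$, $\bar S^{N-1,d-1}_{\mathbb R}$, $S^{N-1,d-1}_{\mathbb R,*}$, $\bar S^{N-1,d-1}_{\mathbb R,*}$, $S^{N-1,d-1}_{\mathbb R,+}$ are obtained from $S^{N-1}_{\mathbb R}$, $\bar S^{N-1}_{\mathbb R}$, $S^{N-1}_{\mathbb R,*}$, $\bar S^{N-1}_{\mathbb R,*}$, $S^{N-1}_{\mathbb R,+}$ respectively by additionally imposing $x_{i_0}x_{i_1}\cdots x_{i_d}=0$ for all pairwise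 distinct $i_0,\dots,i_d$ (vacuous when $d=N$). *)

From HB Require Import structures.
From mathcomp Require Import all_boot all_order all_algebra.
Set Implicit Arguments. Unset Strict Implicit. Unset Printing Implicit Defensive.
Import Order.TTheory GRing.Theory Num.Theory.
Local Open Scope ring_scope.

(* Unital (pre-)C*-algebras over a field C of "complex numbers"
   (C : numClosedFieldType, with conjugation z^* ). *)
Record preCstar (C : numClosedFieldType) := PreCstar {
  cs_car :> algType C;
  cs_star : cs_car -> cs_car;
  cs_norm : cs_car -> C;
  cs_star_invol : forall a, cs_star (cs_star a) = a;
  cs_star_add : forall a b, cs_star (a + b) = cs_star a + cs_star b;
  cs_star_scale : forall (c : C) a, cs_star (c *: a) = c^* *: cs_star a;
  cs_star_mul : forall a b, cs_star (a * b) = cs_star b * cs_star a;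
  cs_norm_ge0 : forall a, 0 <= cs_norm a;
  cs_norm_eq0 : forall a, cs_norm a = 0 -> a = 0;
  cs_norm_add : forall a b, cs_norm (a + b) <= cs_norm a + cs_norm b;
  cs_norm_scale : forall (c : C) a, cs_norm (c *: a) = `|c| * cs_norm a;
  cs_norm_mul : forall a b, cs_norm (a * b) <= cs_norm a * cs_norm b;
  cs_norm_cstar : forall a, cs_norm (cs_star a * a) = cs_norm a ^+ 2
}.

(* A noncommutative subspace of S^{N-1}_{R,+}, given by relations among the
   coordinates: a predicate on tuples of elements of (pre-)C*-algebras. *)
Definition ncspace (C : numClosedFieldType) (N : nat) :=
  forall A : preCstar C, ('I_N -> A) -> Prop.

Definition sphere_rel (C : numClosedFieldType) (N : nat) (A : preCstar C)
    (x : 'I_N -> A) : Prop :=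
  (forall i, cs_star (x i) = x i) /\ \sum_(i < N) x i ^+ 2 = 1.

(* X \subset Y : the relations of Y hold in C(X), i.e. in every
   representation of the relations of X (universal property). *)
Definition ncsub (C : numClosedFieldType) (N : nat) (X Y : ncspace C N) : Prop :=
  forall (A : preCstar C) (x : 'I_N -> A),
    sphere_rel x -> X A x -> Y A x.

Definition ncequal (C : numClosedFieldType) (N : nat) (X Y : ncspace C N) : Prop :=
  ncsub X Y /\ ncsub Y X.

Definition nccap (C : numClosedFieldType) (N : nat) (X Y : ncspace C N) : ncspace C N :=
  fun A x => X A x /\ Y A x.

Definition Sfree (C : numClosedFieldType) (N : nat) : ncspace C N :=
  fun A x => True.

Definition Sclass (C : numClosedFieldType) (N : nat) : ncspace C N :=
  fun A x => forall i j, x i * x j = x j * x i.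

Definition Sbar (C : numClosedFieldType) (N : nat) : ncspace C N :=
  fun A x => forall i j, i != j -> x i * x j = - (x j * x i).

Definition Shalf (C : numClosedFieldType) (N : nat) : ncspace C N :=
  fun A x => forall i j k, x i * x j * x k = x k * x j * x i.

Definition Sbarhalf (C : numClosedFieldType) (N : nat) : ncspace C N :=
  fun A x => forall i j k,
    ([&& i != j, j != k & i != k] -> x i * x j * x k = - (x k * x j * x i)) /\
    (~~ [&& i != j, j != k & i != k] -> x i * x j * x k = x k * x j * x i).

(* Polygonal relations with parameter d >= 1 (superscript d-1):
   x_{i_0} x_{i_1} ... x_{i_d} = 0 for pairwise distinct i_0, ..., i_d. *)
Definition poly_rel (C : numClosedFieldType) (N d : nat) : ncspace C N :=
  fun A x => forall t : 'I_d.+1 -> 'I_N, injective t ->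
    \prod_(l < d.+1) x (t l) = 0.

Definition polyg (C : numClosedFieldType) (N d : nat) (X : ncspace C N) : ncspace C N :=
  nccap X (@poly_rel C N d).

Arguments Sfree C N A x : clear implicits.
Arguments Sclass C N A x : clear implicits.
Arguments Sbar C N A x : clear implicits.
Arguments Shalf C N A x : clear implicits.
Arguments Sbarhalf C N A x : clear implicits.
Arguments polyg C N d X A x : clear implicits.

From HB Require Import structures.
From mathcomp Require Import all_boot all_order all_algebra.
Set Implicit Arguments.
Import Order.TTheory GRing.Theory Num.Theory.
Local Open Scope ring_scope.

(* Once every product of three distinct coordinates vanishes, the half-commutation
   relation x_i x_j x_k = x_k x_j x_i and its signed version only differ on
   products that are zero, so they coincide; conversely, imposing both a relation
   and its negative gives a = -a, i.e. a = 0 since 2 is invertible.  The same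
   mechanism with two coordinates relates commutation, anticommutation and
   x_i x_j = 0.  The inclusions are direct rewriting arguments. *)

Lemma eq_oppv0 (F : numFieldType) (V : lmodType F) (v : V) : v = - v -> v = 0.
Proof.
move=> v_opp; have v2 : v *+ 2 = 0 by rewrite mulr2n {1}v_opp addNr.
have <- : (2%:R^-1 : F) *: (v *+ 2) = v.
  by rewrite -scaler_nat scalerA mulVf ?scale1r // pnatr_eq0.
by rewrite v2 scaler0.
Qed.

Section CoordinateRelations.
Variables (C : numClosedFieldType) (N : nat) (A : preCstar C) (x : 'I_N -> A).

Lemma poly_relP d :
  poly_rel d x <-> forall t : d.+1.-tuple 'I_N, uniq t -> \prod_(i <- t) x i = 0.
Proof.
split=> [rel_x t /tuple_uniqP t_inj | rel_x t t_inj].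
  by rewrite big_tuple; exact: rel_x.
have := rel_x [tuple t l | l < d.+1].
rewrite big_tuple; under eq_bigr do rewrite tnth_mktuple; apply.
by rewrite map_inj_uniq ?enum_uniq.
Qed.

Lemma poly_relS d : poly_rel d x -> poly_rel d.+1 x.
Proof.
move=> rel_x t t_inj; rewrite big_ord_recr /= [X in X * _]rel_x ?mul0r //.
by move=> l l' /t_inj [] /val_inj.
Qed.

Lemma poly_rel1P : poly_rel 1 x <-> forall i j, i != j -> x i * x j = 0.
Proof.
split=> [/poly_relP rel_x i j ij | rel_x]; last apply/poly_relP => t.
  have := rel_x [tuple i; j]; rewrite !big_cons big_nil mulr1; apply.
  by rewrite /= inE ij.
case: t => -[|i [|j []]] //= _; rewrite inE andbT => ij.
by rewrite !big_cons big_nil mulr1 rel_x.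
Qed.

Lemma poly_rel2P : poly_rel 2 x <->
  forall i j k, [&& i != j, j != k & i != k] -> x i * x j * x k = 0.
Proof.
split=> [/poly_relP rel_x i j k ijk | rel_x]; last apply/poly_relP => t.
  have := rel_x [tuple i; j; k]; rewrite !big_cons big_nil mulr1 mulrA; apply.
  by case/and3P: ijk => ij jk ik; rewrite /= !inE negb_or ij ik jk.
case: t => -[|i [|j [|k []]]] //= _; rewrite !inE negb_or => /and3P[/andP[ij ik] jk _].
by rewrite !big_cons big_nil mulr1 mulrA rel_x // ij jk ik.
Qed.

Lemma poly_rel2_rev {i j k} : poly_rel 2 x -> [&& i != j, j != k & i != k] ->
  x i * x j * x k = 0 /\ x k * x j * x i = 0.
Proof.
move/poly_rel2P=> rel_x ijk; split; apply: rel_x => //.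
by case/and3P: ijk => ij jk ik; rewrite ![k == _]eq_sym [j == i]eq_sym ij jk ik.
Qed.

Lemma Sclass_Shalf : Sclass C N A x -> Shalf C N A x.
Proof.
move=> comm i j k.
by rewrite -mulrA [x j * x k]comm mulrA [x i * x k]comm -mulrA [x i * x j]comm mulrA.
Qed.

Lemma Sbar_Sbarhalf : Sbar C N A x -> Sbarhalf C N A x.
Proof.
move=> anti i j k; split=> [/and3P[ij jk ik] | ijk].
  rewrite (anti i j ij) mulNr -[x j * x i * x k]mulrA (anti i k ik) mulrN opprK mulrA.
  by rewrite (anti j k jk) mulNr.
have [<- // | ik] := eqVneq i k.
have [<- | ij] := eqVneq i j.
  by rewrite -mulrA (anti i k ik) mulrN mulrA (anti i k ik) mulNr opprK.
have [jk | jk] := eqVneq j k; last by rewrite ij jk ik in ijk.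
by rewrite jk (anti i k ik) mulNr -[x k * x i * x k]mulrA (anti i k ik) mulrN opprK mulrA.
Qed.

Lemma Sclass_Sbar_poly_rel1 : Sclass C N A x -> Sbar C N A x -> poly_rel 1 x.
Proof.
move=> comm anti; apply/poly_rel1P => i j ij; apply: eq_oppv0.
by rewrite {1}(anti i j ij) (comm j i).
Qed.

Lemma poly_rel1_Sbar : poly_rel 1 x -> Sbar C N A x.
Proof. by move/poly_rel1P=> rel_x i j ij; rewrite !rel_x ?oppr0 // eq_sym. Qed.

Lemma Shalf_Sbarhalf_poly_rel2 :
  Shalf C N A x -> Sbarhalf C N A x -> poly_rel 2 x.
Proof.
move=> half barhalf; apply/poly_rel2P => i j k ijk; apply: eq_oppv0.
by rewrite {1}(proj1 (barhalf i j k) ijk) -(half i j k).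
Qed.

Lemma Shalf_poly_rel2_Sbarhalf :
  Shalf C N A x -> poly_rel 2 x -> Sbarhalf C N A x.
Proof.
move=> half rel_x i j k; split=> [ijk | _]; last exact: half.
by have [-> ->] := poly_rel2_rev rel_x ijk; rewrite oppr0.
Qed.

Lemma Sbar_poly_rel2_Shalf : Sbar C N A x -> poly_rel 2 x -> Shalf C N A x.
Proof.
move=> anti rel_x i j k; have [ijk | ijk] := boolP [&& i != j, j != k & i != k].
  by have [-> ->] := poly_rel2_rev rel_x ijk.
exact: (proj2 (Sbar_Sbarhalf anti i j k)).
Qed.

End CoordinateRelations.

Theorem proposition1p2 (C : numClosedFieldType) (N : nat) (hN : (1 <= N)%N) :
  (* equalities; S^{N-1,0} has d = 1, S^{N-1,1} has d = 2 *)
  [/\ ncequal (nccap (Sclass C N) (Sbar C N)) (polyg C N 1 (Sclass C N)),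
      ncequal (nccap (Sclass C N) (Sbarhalf C N)) (polyg C N 2 (Sclass C N)),
      ncequal (nccap (Shalf C N) (Sbar C N)) (polyg C N 2 (Sbar C N)) &
      ncequal (nccap (Shalf C N) (Sbarhalf C N)) (polyg C N 2 (Shalf C N))] /\
  (* inclusions *)
  [/\ ncsub (polyg C N 1 (Sclass C N)) (polyg C N 2 (Sclass C N)) /\
        ncsub (polyg C N 2 (Sclass C N)) (Sclass C N),
      ncsub (polyg C N 1 (Sclass C N)) (polyg C N 2 (Sbar C N)) /\
        ncsub (polyg C N 2 (Sbar C N)) (Sbar C N),
      ncsub (polyg C N 2 (Sbar C N)) (polyg C N 2 (Shalf C N)) /\
        ncsub (polyg C N 2 (Shalf C N)) (Shalf C N),
      ncsub (polyg C N 2 (Sclass C N)) (polyg C N 2 (Shalf C N)) /\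
        ncsub (polyg C N 2 (Shalf C N)) (Sbarhalf C N) &
      (ncsub (Sbar C N) (Sbarhalf C N) /\ ncsub (Sbarhalf C N) (Sfree C N)) /\
      (ncsub (Sclass C N) (Shalf C N) /\ ncsub (Shalf C N) (Sfree C N))].
Proof.
split.
  split; split=> A x _ [X Y]; split=> //.
  - exact: Sclass_Sbar_poly_rel1.
  - exact: poly_rel1_Sbar.
  - exact: Shalf_Sbarhalf_poly_rel2 (Sclass_Shalf X) Y.
  - exact: Shalf_poly_rel2_Sbarhalf (Sclass_Shalf X) Y.
  - exact: Shalf_Sbarhalf_poly_rel2 X (Sbar_Sbarhalf Y).
  - exact: Sbar_poly_rel2_Shalf.
  - exact: Shalf_Sbarhalf_poly_rel2.
  - exact: Shalf_poly_rel2_Sbarhalf.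
have polyg_sub d X : ncsub (polyg C N d X) X by move=> A x _ [].
split.
- split; last exact: polyg_sub.
  by move=> A x _ [X Y]; split=> //; exact: poly_relS.
- split; last exact: polyg_sub.
  by move=> A x _ [_ /[dup] /poly_rel1_Sbar X /poly_relS Y].
- split; last exact: polyg_sub.
  by move=> A x _ [X Y]; split=> //; exact: Sbar_poly_rel2_Shalf.
- split; first by move=> A x _ [/Sclass_Shalf X Y].
  by move=> A x _ []; exact: Shalf_poly_rel2_Sbarhalf.
- by split; split=> A x _ //; [exact: Sbar_Sbarhalf | exact: Sclass_Shalf].
Qed.
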